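(* Let $S$ be a $k$-dimensional subspace of $\mathbb{R}^n$ with orthogonal projection $P_S$, let $B$ be a real symmetric $n\times n$ matrix, $l\in\mathbb{R}$, $\delta_L>0$, $t>0$, and $Y=vv^T$ with $v\in\mathbb{R}^n$. Suppose $\lambda_{\min}(B|_S)>l+\delta_L$. Define $$L_B=\frac{\bigl(P_S(B-(l+\delta_L)I)P_S\bigr)^{\dagger 2}}{\Phi_{l+\delta_L}(B)-\Phi_l(B)}-\bigl(P_S(B-(l+\delta_L)I)P_S\bigr)^{\dagger}.$$ If $L_B\bullet Y\ge 1/t$, then $\Phi_{l+\delta_L}(B+tY)\le\Phi_l(B)$ and $\lambda_{\min}((B+tY)|_S)>l+\delta_L$.
   Context: $B|_S$ denotes the restriction (compression) of $B$ to $S$, i.e. the $k\times k$ matrix of the quadratic form $x\mapsto x^TBx$ on $S$ in an orthonormal basis of $S$; its eigenvalues are $\lambda_1(B|_S)\le\dots\le\lambda_k(B|_S)$. For $l<\lambda_{\min}(B|_S)$, the lower potential is $\Phi_l(B)=\operatorname{Tr}\bigl((P_S(B-lI)P_S)^\dagger\bigr)=\sum_{i=1}^k\frac{1}{\lambda_i(B|_S)-l}$. $A^\dagger$ is the Moore–Penrose pseudoinverse, $A^{\dagger2}=(A^\dagger)^2$, and $C\bullet D=\operatorname{Tr}(C^TD)$. *)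

From HB Require Import structures.
From mathcomp Require Import all_boot all_order all_algebra.
From mathcomp Require Import polyrcf.
Set Implicit Arguments. Unset Strict Implicit. Unset Printing Implicit Defensive.
Import Order.TTheory GRing.Theory Num.Theory.
Local Open Scope ring_scope.

Section Defs.
Variable R : rcfType.

(* Moore--Penrose pseudoinverse, via the full-rank factorisation
   A = C F with C := col_base A (full column rank), F := row_base A
   (full row rank):  A^+ = F^T (F F^T)^-1 (C^T C)^-1 C^T. *)
Definition pinv m n (A : 'M[R]_(m, n)) : 'M[R]_(n, m) :=
  let C := col_base A in let F := row_base A in
  (F^T *m invmx (F *m F^T)) *m (invmx (C^T *m C) *m C^T).

Definition frobdot m n (C D : 'M[R]_(m, n)) : R := \tr (C^T *m D).

(* The subspace S of R^n (dimension k) is given by a k x n matrix U whose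
   rows form an orthonormal basis of S (U U^T = I_k).  Then P_S = U^T U. *)
Definition projS k n (U : 'M[R]_(k, n)) : 'M[R]_n := U^T *m U.

(* Compression B|_S : the matrix of x |-> x^T B x on S in the basis U. *)
Definition restr k n (U : 'M[R]_(k, n)) (B : 'M[R]_n) : 'M[R]_k :=
  U *m B *m U^T.

(* smallest eigenvalue: the least (real) root of the characteristic
   polynomial (rootsR lists the real roots in increasing order). *)
Definition lambda_min k (M : 'M[R]_k) : R := head 0 (rootsR (char_poly M)).

Definition shiftS k n (U : 'M[R]_(k, n)) (B : 'M[R]_n) (l : R) : 'M[R]_n :=
  projS U *m (B - l%:M) *m projS U.

Definition Phi k n (U : 'M[R]_(k, n)) (B : 'M[R]_n) (l : R) : R :=
  \tr (pinv (shiftS U B l)).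

Definition LB k n (U : 'M[R]_(k, n)) (B : 'M[R]_n) (l dL : R) : 'M[R]_n :=
  let X := pinv (shiftS U B (l + dL)) in
  (Phi U B (l + dL) - Phi U B l)^-1 *: (X *m X) - X.

End Defs.

(* Everything happens in the coordinates of S.  If the rows of U are an
   orthonormal basis of S and M := U B U^T, then P_S (B - c I) P_S =
   U^T (M - c I) U, whose pseudoinverse is U^T (M - c I)^-1 U, so
   Phi_c(B) = tr (M - c I)^-1, and adding t v v^T to B adds t u u^T to M, with
   u := U v.  For W := (M - (l + dL) I)^-1 the Sherman-Morrison formula gives
     Phi_{l+dL}(B + t v v^T) = tr W - t u^T W^2 u / (1 + t u^T W u),
   while L_B . v v^T = u^T W^2 u / (Phi_{l+dL}(B) - Phi_l(B)) - u^T W u, so the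
   hypothesis L_B . v v^T >= 1/t says exactly that the decrease of the
   potential is at least Phi_{l+dL}(B) - Phi_l(B).  Finally M - (l + dL) I is
   positive definite (by the spectral theorem, since all eigenvalues of the
   symmetric M exceed l + dL), and stays so after adding t u u^T, which keeps
   the smallest eigenvalue above l + dL. *)

From HB Require Import structures.
From mathcomp Require Import all_boot all_order all_algebra.
From mathcomp Require Import polyrcf complex ring lra.
Import Order.TTheory GRing.Theory Num.Theory.
Set Implicit Arguments. Unset Strict Implicit. Unset Printing Implicit Defensive.
Local Open Scope ring_scope.

Section PositiveDefinite.
Variable R : realFieldType.

Definition posdefmx k (A : 'M[R]_k) :=
  forall x : 'rV_k, x != 0 -> 0 < (x *m A *m x^T) 0 0.

Lemma mulmx_tr_ge0 k (x : 'rV[R]_k) : 0 <= (x *m x^T) 0 0.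
Proof. by rewrite mxE; apply: sumr_ge0 => j _; rewrite mxE -expr2 sqr_ge0. Qed.

Lemma mulmx_tr_gt0 k (x : 'rV[R]_k) : x != 0 -> 0 < (x *m x^T) 0 0.
Proof.
move=> x_neq0; rewrite lt_def mulmx_tr_ge0 andbT; apply: contra x_neq0.
rewrite mxE psumr_eq0 => [/allP x2_eq0|i _]; last by rewrite mxE -expr2 sqr_ge0.
apply/eqP/rowP => j; have := x2_eq0 j (mem_index_enum _).
by rewrite /= !mxE -expr2 sqrf_eq0 => /eqP.
Qed.

Lemma row_free_gram_unit m n (W : 'M[R]_(m, n)) :
  row_free W -> W *m W^T \in unitmx.
Proof.
move=> freeW; rewrite -row_free_unit; apply: inj_row_free => y yWWt0.
apply/eqP; rewrite -(mulmx_free_eq0 _ freeW); apply: contraLR isT => yW_neq0.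
have := mulmx_tr_gt0 yW_neq0.
by rewrite trmx_mul !mulmxA -(mulmxA y) yWWt0 mul0mx mxE ltxx.
Qed.

Lemma posdefmx_unit k (A : 'M[R]_k) : posdefmx A -> A \in unitmx.
Proof.
move=> posA; rewrite -row_free_unit; apply: inj_row_free => x xA0.
apply: contraTeq isT => x_neq0.
by have := posA x x_neq0; rewrite xA0 mul0mx mxE ltxx.
Qed.

Lemma posdefmx_add_rank1 k (A : 'M[R]_k) (u : 'cV_k) t :
  0 <= t -> posdefmx A -> posdefmx (A + t *: (u *m u^T)).
Proof.
move=> t_ge0 posA x x_neq0; rewrite mulmxDr mulmxDl mxE ltr_wpDr ?posA //.
rewrite -scalemxAr -scalemxAl mxE mulr_ge0 //.
by rewrite mulmxA -(mulmxA (x *m u)) -trmx_mul mulmx_tr_ge0.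
Qed.

Lemma posdefmx_inv_quad_ge0 k (A : 'M[R]_k) (u : 'cV_k) :
  A^T = A -> posdefmx A -> 0 <= (u^T *m invmx A *m u) 0 0.
Proof.
move=> symA posA; set r := u^T *m invmx A.
have invA_sym : (invmx A)^T = invmx A by rewrite trmx_inv symA.
have -> : u^T *m invmx A *m u = r *m A *m r^T.
  by rewrite /r trmx_mul invA_sym trmxK !mulmxA -(mulmxA _ A) mulmxV
             ?posdefmx_unit ?mulmx1.
have [->|r_neq0] := eqVneq r 0; first by rewrite !mul0mx mxE.
exact/ltW/posA.
Qed.

Lemma sym_quad_sqr_ge0 k (A : 'M[R]_k) (u : 'cV_k) :
  A^T = A -> 0 <= (u^T *m A *m A *m u) 0 0.
Proof.
by move=> symA; rewrite -mulmxA -[A *m u]trmxK trmx_mul symA mulmx_tr_ge0.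
Qed.

Lemma posdefmx_char_root_gt k (A : 'M[R]_k) l r :
  posdefmx (A - l%:M) -> root (char_poly A) r -> l < r.
Proof.
move=> posA; rewrite -eigenvalue_root_char => /eigenvalueP [x xA x_neq0].
have := posA x x_neq0.
rewrite mulmxBr mul_mx_scalar xA -scalerBl -scalemxAl mxE.
by rewrite pmulr_lgt0 ?subr_gt0 // mulmx_tr_gt0.
Qed.

End PositiveDefinite.

Section SymmetricSpectrum.
Variables (R : rcfType) (k : nat) (M : 'M[R]_k).
Hypothesis symM : M^T = M.

Local Notation toC := (real_complex R).
Local Notation MC := (map_mx toC M).

Lemma map_real_complex_hermsym : MC \is hermsymmx.
Proof.
apply: realsym_hermsym.
  apply/is_hermitianmxP; rewrite expr0 scale1r; apply/matrixP => i j.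
  by rewrite !mxE -[M in LHS]symM mxE.
by apply/mxOverP => i j; rewrite mxE; apply/complex_realP; eexists.
Qed.

Let P := spectralmx MC.
Let d := spectral_diag MC.

Let MC_spectral : MC = invmx P *m diag_mx d *m P.
Proof. exact/orthomx_spectralP/hermitian_normalmx/map_real_complex_hermsym. Qed.

Let d_real i : toC (complex.Re (d 0 i)) = d 0 i.
Proof.
have /mxOverP/(_ 0 i) := hermitian_spectral_diag_real map_real_complex_hermsym.
exact: RRe_real.
Qed.

Let root_char_spectral_diag i : root (char_poly M) (complex.Re (d 0 i)).
Proof.
have : root (char_poly MC) (d 0 i).
  rewrite -eigenvalue_root_char; apply/eigenvalueP; exists (row i P).
    rewrite {1}MC_spectral !mulmxA -row_mul mulmxV ?spectral_unit // row1.
    by rewrite -rowE row_diag_mx -scalemxAl -rowE.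
  rewrite rowE mulmx_free_eq0 ?row_free_unit ?spectral_unit //.
  by apply/eqP => /matrixP /(_ 0 i); rewrite !mxE !eqxx => /eqP; rewrite oner_eq0.
rewrite -map_char_poly -[X in root _ X]d_real /root horner_map => /eqP Ere0.
by apply/eqP/complexI; rewrite Ere0.
Qed.

Lemma sym_char_poly_real_root : (0 < k)%N -> exists r, root (char_poly M) r.
Proof.
by move=> k_gt0; eexists; apply: (root_char_spectral_diag (Ordinal k_gt0)).
Qed.

(* A real row vector x becomes y := x P^-1 in the eigenbasis, where
   x (M - l I) x^T = sum_j (d_j - l) |y_j|^2. *)
Lemma posdefmx_of_char_roots_gt l :
  (forall r, root (char_poly M) r -> l < r) -> posdefmx (M - l%:M).
Proof.
move=> roots_gt x x_neq0.
pose e := \row_j (d 0 j - toC l).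
have MC_shift : MC - (toC l)%:M = invmx P *m diag_mx e *m P.
  have -> : diag_mx e = diag_mx d - (toC l)%:M.
    apply/matrixP => i j; rewrite !mxE.
    by case: eqP => [->|_]; rewrite ?mulr0n ?subr0.
  rewrite mulmxBr mulmxBl -MC_spectral mul_mx_scalar -scalemxAl.
  by rewrite mulVmx ?spectral_unit ?scalemx1.
have e_gt0 j : 0 < e 0 j.
  rewrite !mxE -d_real -rmorphB /= -(rmorph0 toC) ltcR subr_gt0.
  exact/roots_gt/root_char_spectral_diag.
pose xC := map_mx toC x; pose y := xC *m invmx P.
have xC_conj : map_mx Num.conj xC = xC.
  apply/matrixP => i j; rewrite !mxE conj_Creal //.
  by apply/complex_realP; eexists.
have PxC : P *m xC^T = (map_mx Num.conj y)^T.
  rewrite /y map_mxM xC_conj invmx_unitary ?spectral_unitarymx //.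
  rewrite -map_mx_comp map_mx_id => [|z /=]; last by rewrite conjCK.
  by rewrite trmx_mul trmxK.
have [j yj_neq0] : exists j, y 0 j != 0.
  apply/existsP; move: x_neq0; apply: contraNT.
  rewrite negb_exists => /forallP y0.
  have /eqP : y = 0 by apply/rowP => i; rewrite [RHS]mxE; exact/eqP/negPn/y0.
  rewrite /y mulmx_free_eq0 ?row_free_unit ?unitmx_inv ?spectral_unit //.
  by rewrite map_mx_eq0.
rewrite -ltcR rmorph0.
have -> : toC ((x *m (M - l%:M) *m x^T) 0 0) =
          map_mx toC (x *m (M - l%:M) *m x^T) 0 0 by rewrite [RHS]mxE.
rewrite !map_mxM -map_trmx map_mxB map_scalar_mx -/xC.
rewrite MC_shift !mulmxA -/y -mulmxA PxC mxE.
rewrite (eq_bigr (fun j => e 0 j * (y 0 j * (y 0 j)^*))) => [|i _]; last first.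
  by rewrite mul_mx_diag !mxE mulrAC mulrC mulrA.
rewrite (bigD1 j) //= ltr_wpDr //.
  by apply: sumr_ge0 => i _; rewrite mulr_ge0 ?mul_conjC_ge0 // ltW.
by rewrite mulr_gt0 // mul_conjC_gt0.
Qed.

End SymmetricSpectrum.

Section SmallestEigenvalue.
Variable R : rcfType.

Lemma in_rootsR (p : {poly R}) x : p != 0 -> (x \in rootsR p) = root p x.
Proof. by move=> p_neq0; rewrite -(roots_on_rootsR p_neq0 x) in_itv. Qed.

Lemma char_root_gt_of_lambda_min k (A : 'M[R]_k) l r :
  l < lambda_min A -> root (char_poly A) r -> l < r.
Proof.
rewrite /lambda_min -in_rootsR ?monic_neq0 ?char_poly_monic //.
have : sorted <%R (rootsR (char_poly A)) := sorted_roots _ _ _.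
case: rootsR => //= h s sorted_hs lt_h.
rewrite inE => /orP[/eqP -> //|r_in_s].
have /allP/(_ r r_in_s) := order_path_min lt_trans sorted_hs.
exact: lt_trans.
Qed.

Lemma posdefmx_of_lambda_min_gt k (M : 'M[R]_k) l :
  M^T = M -> l < lambda_min M -> posdefmx (M - l%:M).
Proof.
move=> symM lt_l; apply: posdefmx_of_char_roots_gt => // r.
exact: char_root_gt_of_lambda_min.
Qed.

(* For k = 0 the root list is empty and lambda_min is the default value 0. *)
Lemma lambda_min_gt_of_posdefmx k (M : 'M[R]_k) l :
  M^T = M -> (0 < k)%N -> posdefmx (M - l%:M) -> l < lambda_min M.
Proof.
move=> symM k_gt0 posM; apply: posdefmx_char_root_gt posM _.
have [r] := sym_char_poly_real_root symM k_gt0.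
rewrite /lambda_min -!in_rootsR ?monic_neq0 ?char_poly_monic //.
by case: rootsR => // h s _; rewrite inE eqxx.
Qed.

End SmallestEigenvalue.

Section RankOneUpdate.
Variables (R : fieldType) (k : nat) (A : 'M[R]_k) (u : 'cV[R]_k) (t : R).
Hypothesis unitA : A \in unitmx.

Lemma invmx_add_rank1 (q := (u^T *m invmx A *m u) 0 0) : 1 + t * q != 0 ->
  invmx (A + t *: (u *m u^T)) =
  invmx A - (t / (1 + t * q)) *: (invmx A *m u *m u^T *m invmx A).
Proof.
move=> den_neq0; set c := t / (1 + t * q); set W := invmx A.
have uWu : u^T *m W *m u = q%:M by rewrite [LHS]mx11_scalar.
set P := u *m u^T *m W.
have AW : A *m W = 1%:M by rewrite mulmxV.
have AWuuW : A *m (W *m u *m u^T *m W) = P by rewrite !mulmxA AW mul1mx.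
have uuWuuW : (u *m u^T) *m (W *m u *m u^T *m W) = q *: P.
  have uuWu : u *m u^T *m W *m u = q *: u.
    by rewrite -(mulmxA (u *m u^T)) -(mulmxA u) (mulmxA u^T) uWu mul_mx_scalar.
  by rewrite !mulmxA uuWu /P -!scalemxAl.
have mulV : (A + t *: (u *m u^T)) *m (W - c *: (W *m u *m u^T *m W)) = 1%:M.
  rewrite mulmxDl !mulmxBr AW -scalemxAr AWuuW -!scalemxAl -!scalemxAr uuWuuW -/P.
  have -> : t *: P - t *: (c *: (q *: P)) = (t - t * c * q) *: P.
    by rewrite !scalerA scalerBl.
  rewrite -addrA -scaleNr -scalerDl.
  have -> : - c + (t - t * c * q) = 0 by rewrite /c; field.
  by rewrite scale0r addr0.
have [unitN _] := mulmx1_unit mulV.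
by rewrite -[LHS]mulmx1 -mulV mulmxA mulVmx ?mul1mx.
Qed.

Lemma mxtrace_invmx_add_rank1 (q := (u^T *m invmx A *m u) 0 0) :
  1 + t * q != 0 ->
  \tr (invmx (A + t *: (u *m u^T))) =
  \tr (invmx A) - t * (u^T *m invmx A *m invmx A *m u) 0 0 / (1 + t * q).
Proof.
move=> den_neq0; rewrite invmx_add_rank1 // linearB /= mxtraceZ.
rewrite -(mulmxA (invmx A *m u)) mxtrace_mulC !mulmxA trace_mx11.
by rewrite mulrAC.
Qed.

End RankOneUpdate.

Lemma frobdot_outer (R : rcfType) n (A : 'M[R]_n) (v : 'cV[R]_n) :
  frobdot A (v *m v^T) = (v^T *m A *m v) 0 0.
Proof.
rewrite /frobdot mulmxA mxtrace_mulC trace_mx11 mulmxA.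
have -> : v^T *m A^T *m v = (v^T *m A *m v)^T by rewrite !trmx_mul trmxK mulmxA.
by rewrite mxE.
Qed.

Lemma mx_neq0_rows_gt0 (R : nmodType) m n (A : 'M[R]_(m, n)) :
  A != 0 -> (0 < m)%N.
Proof. by case: m A => // A; rewrite flatmx0 eqxx. Qed.

Section Pseudoinverse.
Variables (R : rcfType) (k n : nat) (U : 'M[R]_(k, n)).
Hypothesis orthoU : U *m U^T = 1%:M.

(* Both factors of the full-rank factorisation A = col_base A * row_base A
   of A := U^T C U factor through U, which forces the pinv formula to invert C. *)
Lemma pinv_conj_orthonormal (C : 'M[R]_k) :
  C \in unitmx -> pinv (U^T *m C *m U) = U^T *m invmx C *m U.
Proof.
move=> unitC; set A := U^T *m C *m U; rewrite /pinv.
set F := row_base A; set G := col_base A.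
have [X FX] : exists X, F = X *m U.
  by apply/submxP; rewrite /F eq_row_base /A submxMl.
have [Fri FFri] : exists Fri, F *m Fri = 1%:M by apply/row_freeP/row_base_free.
have [Z GZ] : exists Z, G = U^T *m Z.
  exists (C *m U *m Fri).
  by rewrite -[G]mulmx1 -FFri mulmxA mulmx_base /A !mulmxA.
have ZX : Z *m X = C.
  have : U *m A *m U^T = C.
    by rewrite /A !mulmxA orthoU mul1mx -(mulmxA C) orthoU mulmx1.
  rewrite -[A in U *m A]mulmx_base -/G -/F GZ FX !mulmxA orthoU mul1mx.
  by rewrite -!mulmxA orthoU mulmx1.
have GtG : G^T *m G = Z^T *m Z.
  by rewrite GZ trmx_mul trmxK mulmxA -(mulmxA _ U) orthoU mulmx1.
have FFt : F *m F^T = X *m X^T.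
  by rewrite FX trmx_mul mulmxA -(mulmxA X) orthoU mulmx1.
have unitXXt : X *m X^T \in unitmx.
  by rewrite -FFt row_free_gram_unit ?row_base_free.
have unitZtZ : Z^T *m Z \in unitmx.
  rewrite -GtG -{2}[G]trmxK row_free_gram_unit // /row_free mxrank_tr.
  exact: col_base_full.
rewrite FFt GtG FX GZ !trmx_mul trmxK.
set H := X^T *m invmx (X *m X^T) *m (invmx (Z^T *m Z) *m Z^T).
suff <- : H = invmx C by rewrite /H !mulmxA.
have CHC : C *m H *m C = C.
  have XXtK p (Y : 'M_(p, _)) : Y *m X *m X^T *m invmx (X *m X^T) = Y.
    by rewrite -(mulmxA Y) -(mulmxA Y) mulmxV // mulmx1.
  have ZtZK p (Y : 'M_(p, _)) : Y *m invmx (Z^T *m Z) *m Z^T *m Z = Y.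
    by rewrite -(mulmxA (Y *m _)) -(mulmxA Y) mulVmx // mulmx1.
  by rewrite -{1}ZX -ZX /H !mulmxA XXtK ZtZK.
have := congr1 (fun Y => invmx C *m Y *m invmx C) CHC.
by rewrite /= !mulmxA !mulVmx // !mul1mx mulmxK // => <-; rewrite /H !mulmxA.
Qed.

End Pseudoinverse.

Section Compression.
Variables (R : rcfType) (k n : nat) (U : 'M[R]_(k, n)).

Lemma restr_trmx (B : 'M[R]_n) : B^T = B -> (restr U B)^T = restr U B.
Proof. by move=> symB; rewrite /restr !trmx_mul trmxK symB mulmxA. Qed.

Lemma restr_add_rank1 (B : 'M[R]_n) (v : 'cV[R]_n) t :
  restr U (B + t *: (v *m v^T)) = restr U B + t *: (U *m v *m (U *m v)^T).
Proof.
by rewrite /restr mulmxDr mulmxDl -scalemxAr -scalemxAl trmx_mul !mulmxA.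
Qed.

Lemma restr_shift_unit (B : 'M[R]_n) c :
  B^T = B -> c < lambda_min (restr U B) -> restr U B - c%:M \in unitmx.
Proof.
move=> symB lt_c.
by apply/posdefmx_unit/posdefmx_of_lambda_min_gt/lt_c/restr_trmx.
Qed.

Hypothesis orthoU : U *m U^T = 1%:M.

Lemma shiftS_restr (B : 'M[R]_n) c :
  shiftS U B c = U^T *m (restr U B - c%:M) *m U.
Proof.
have <- : U *m (B - c%:M) *m U^T = restr U B - c%:M.
  by rewrite mulmxBr mulmxBl mul_mx_scalar -scalemxAl orthoU scalemx1.
by rewrite /shiftS /projS !mulmxA.
Qed.

Lemma pinv_shiftS (B : 'M[R]_n) c : restr U B - c%:M \in unitmx ->
  pinv (shiftS U B c) = U^T *m invmx (restr U B - c%:M) *m U.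
Proof. by move=> unitBc; rewrite shiftS_restr pinv_conj_orthonormal. Qed.

Lemma Phi_restr (B : 'M[R]_n) c : restr U B - c%:M \in unitmx ->
  Phi U B c = \tr (invmx (restr U B - c%:M)).
Proof.
by move=> unitBc; rewrite /Phi pinv_shiftS // mxtrace_mulC mulmxA orthoU mul1mx.
Qed.

Lemma frobdot_LB (B : 'M[R]_n) l dL (v : 'cV[R]_n) :
  let W := invmx (restr U B - (l + dL)%:M) in let u := U *m v in
  restr U B - (l + dL)%:M \in unitmx ->
  frobdot (LB U B l dL) (v *m v^T) =
  (Phi U B (l + dL) - Phi U B l)^-1 * (u^T *m W *m W *m u) 0 0
  - (u^T *m W *m u) 0 0.
Proof.
move=> W u unitB'; rewrite frobdot_outer /LB pinv_shiftS // -/W.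
set c := _^-1; suff -> : v^T *m (c *: (U^T *m W *m U *m (U^T *m W *m U))
    - U^T *m W *m U) *m v = c *: (u^T *m W *m W *m u) - u^T *m W *m u.
  by rewrite !mxE.
rewrite mulmxBr mulmxBl -scalemxAr -scalemxAl /u trmx_mul !mulmxA.
by rewrite -(mulmxA _ U U^T) orthoU mulmx1.
Qed.

End Compression.

Lemma barrier_gain_bound (R : realFieldType) (t q1 q2 D : R) :
  0 < t -> 0 <= q1 -> 0 <= q2 -> 1 / t <= D^-1 * q2 - q1 ->
  0 < q2 /\ D <= t * q2 / (1 + t * q1).
Proof.
move=> t_gt0 q1_ge0 q2_ge0; rewrite lerBrDr => hD.
have lhs_gt0 : 0 < 1 / t + q1 by rewrite ltr_wpDr // divr_gt0.
have Dq2_gt0 : 0 < D^-1 * q2 := lt_le_trans lhs_gt0 hD.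
have q2_gt0 : 0 < q2.
  rewrite lt_def q2_ge0 andbT.
  by apply: contraTneq Dq2_gt0 => ->; rewrite mulr0 ltxx.
have D_gt0 : 0 < D by rewrite -invr_gt0 -(pmulr_lgt0 _ q2_gt0).
split=> //; rewrite ler_pdivlMr; last by rewrite ltr_wpDr // mulr_ge0 // ltW.
have -> : D * (1 + t * q1) = t * D * (1 / t + q1) by field; rewrite gt_eqF.
have -> : t * q2 = t * D * (D^-1 * q2) by field; rewrite gt_eqF.
exact: ler_wpM2l (mulr_ge0 (ltW t_gt0) (ltW D_gt0)) _ _ hD.
Qed.

Lemma rank1_barrier_step (R : rcfType) k (M : 'M[R]_k) (u : 'cV[R]_k) l l' t :
  M^T = M -> l < l' -> l' < lambda_min M -> 0 < t ->
  let W := invmx (M - l'%:M) in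
  1 / t <= (\tr W - \tr (invmx (M - l%:M)))^-1 * (u^T *m W *m W *m u) 0 0
           - (u^T *m W *m u) 0 0 ->
  \tr (invmx (M + t *: (u *m u^T) - l'%:M)) <= \tr (invmx (M - l%:M)) /\
  l' < lambda_min (M + t *: (u *m u^T)).
Proof.
move=> symM lt_l lt_lmin t_gt0 W hW.
have symM' : (M - l'%:M)^T = M - l'%:M by rewrite linearB /= symM tr_scalar_mx.
have symW : W^T = W by rewrite trmx_inv symM'.
have posM' : posdefmx (M - l'%:M) by exact: posdefmx_of_lambda_min_gt.
have posM : posdefmx (M - l%:M).
  exact: posdefmx_of_lambda_min_gt (lt_trans lt_l lt_lmin).
have q1_ge0 := posdefmx_inv_quad_ge0 u symM' posM'.
have [q2_gt0 gain] :=
  barrier_gain_bound t_gt0 q1_ge0 (sym_quad_sqr_ge0 u symW) hW.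
have posN : posdefmx (M + t *: (u *m u^T) - l'%:M).
  by rewrite addrAC; apply: posdefmx_add_rank1 (ltW t_gt0) posM'.
split.
  have den_neq0 : 1 + t * (u^T *m W *m u) 0 0 != 0.
    by rewrite gt_eqF // ltr_wpDr // mulr_ge0 // ltW.
  by rewrite addrAC mxtrace_invmx_add_rank1 ?posdefmx_unit // -/W; lra.
apply: lambda_min_gt_of_posdefmx posN.
  by rewrite linearD linearZ /= symM trmx_mul trmxK.
apply: (@mx_neq0_rows_gt0 _ _ 1 u); apply: contraTneq q2_gt0 => ->.
by rewrite mulmx0 mxE ltxx.
Qed.

Theorem lemma3p11 (R : rcfType) (n k : nat) (U : 'M[R]_(k, n))
  (B : 'M[R]_n) (l dL t : R) (v : 'cV[R]_n) :
  U *m U^T = 1%:M ->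
  B^T = B ->
  0 < dL -> 0 < t ->
  l + dL < lambda_min (restr U B) ->
  1 / t <= frobdot (LB U B l dL) (v *m v^T) ->
  Phi U (B + t *: (v *m v^T)) (l + dL) <= Phi U B l /\
  l + dL < lambda_min (restr U (B + t *: (v *m v^T))).
Proof.
move=> orthoU symB dL_gt0 t_gt0 lt_lmin hLB.
have lt_l : l < l + dL by rewrite ltrDl.
rewrite frobdot_LB ?restr_shift_unit // !Phi_restr ?restr_shift_unit //
  ?(lt_trans lt_l) // in hLB.
have [le_tr lt_lmin'] :=
  rank1_barrier_step (restr_trmx U symB) lt_l lt_lmin t_gt0 hLB.
have symB' : (B + t *: (v *m v^T))^T = B + t *: (v *m v^T).
  by rewrite linearD linearZ /= symB trmx_mul trmxK.
rewrite restr_add_rank1; split=> //.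
by rewrite !Phi_restr ?restr_shift_unit ?(lt_trans lt_l) ?restr_add_rank1.
Qed.
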